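(* Let $c,m\in\mathbb{Z}_{\ge0}$. Let $\mathrm{Sym}$ act on $\mathbb{Z}^{(\mathbb{N}\times[c])}\oplus\mathbb{Z}^m$ by $\sigma(\mathbf{u},\mathbf{v})=(\sigma(\mathbf{u}),\mathbf{v})$. Then every $\mathrm{Sym}$-invariant lattice in $\mathbb{Z}^{(\mathbb{N}\times[c])}\oplus\mathbb{Z}^m$ has a finite equivariant Graver basis.
   Context: $\mathbb{N}=\{1,2,\dots\}$, $[c]=\{1,\dots,c\}$ (empty if $c=0$). $\mathbb{Z}^{(\mathbb{N}\times[c])}$ is the free abelian group with basis $\mathbb{N}\times[c]$ (standard basis $\mathbf{e}_{i,j}$); $\mathbb{Z}^{(\mathbb{N}\times[c])}\oplus\mathbb{Z}^m$ is viewed as the free abelian group on the disjoint union $(\mathbb{N}\times[c])\sqcup[m]$; a lattice is a subgroup. $\mathrm{Sym}$ is the group of permutations of $\mathbb{N}$ fixing all but finitely many points, acting on $\mathbb{Z}^{(\mathbb{N}\times[c])}$ by linear extension of $\sigma(\mathbf{e}_{i,j})=\mathbf{e}_{\sigma(i),j}$. $\mathbf{u}\sqsubseteq\mathbf{v}$ iff $u_kv_k\ge0$ and $|u_k|\le|v_k|$ for every coordinate $k$; the Graver basis of a lattice $L$ is the set of $\sqsubseteq$-minimal elements of $L\setminus\{\mathbf{0}\}$; $\mathcal{G}\subseteq L$ is an equivariant Graver basis if $\{\sigma(\mathbf{g})\mid\sigma\in\mathrm{Sym},\mathbf{g}\in\mathcal{G}\}$ is the Graver basis of $L$. *)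

From Stdlib Require List.
From mathcomp Require Import all_boot all_order all_algebra.
Set Implicit Arguments. Unset Strict Implicit. Unset Printing Implicit Defensive.
Import Order.TTheory GRing.Theory Num.Theory.
Local Open Scope ring_scope.

(* The index set N = {1,2,...} is encoded
   by nat = {0,1,2,...} via i |-> i+1 (shift by one).  A vector is a pair
   (u, v) with u : nat -> 'I_c -> int (required finitely supported) and
   v : 'I_m -> int. *)
Definition vec (c m : nat) : Type := ((nat -> 'I_c -> int) * ('I_m -> int))%type.

Definition fin_supp (c m : nat) (x : vec c m) : Prop :=
  exists N : nat, forall i : nat, (N <= i)%N -> forall j : 'I_c, x.1 i j = 0.

Definition vzero (c m : nat) : vec c m := (fun _ _ => 0, fun _ => 0).
Definition vadd (c m : nat) (x y : vec c m) : vec c m :=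
  (fun i j => x.1 i j + y.1 i j, fun k => x.2 k + y.2 k).
Definition vopp (c m : nat) (x : vec c m) : vec c m :=
  (fun i j => - x.1 i j, fun k => - x.2 k).

Definition lattice (c m : nat) (L : vec c m -> Prop) : Prop :=
  [/\ forall x, L x -> fin_supp x,
      L (vzero c m),
      forall x y, L x -> L y -> L (vadd x y)
    & forall x, L x -> L (vopp x)].

Record finperm := FinPerm {
  pfun : nat -> nat;
  pinv : nat -> nat;
  pfunK : cancel pfun pinv;
  pinvK : cancel pinv pfun;
  pfin : exists N : nat, forall i : nat, (N <= i)%N -> pfun i = i }.

(* sigma (u, v) = (sigma u, v), where sigma e_{i,j} = e_{sigma i, j};
   hence (sigma u)_{i,j} = u_{sigma^-1 i, j}. *)
Definition act (c m : nat) (s : finperm) (x : vec c m) : vec c m :=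
  (fun i j => x.1 (pinv s i) j, x.2).

Definition sym_invariant (c m : nat) (L : vec c m -> Prop) : Prop :=
  forall (s : finperm) (x : vec c m), L x -> L (act s x).

Definition coord_le (a b : int) : Prop := 0 <= a * b /\ `|a| <= `|b|.

Definition sqle (c m : nat) (x y : vec c m) : Prop :=
  (forall i j, coord_le (x.1 i j) (y.1 i j)) /\ (forall k, coord_le (x.2 k) (y.2 k)).

Definition graver_elem (c m : nat) (L : vec c m -> Prop) (g : vec c m) : Prop :=
  [/\ L g, g <> vzero c m &
      forall h, L h -> h <> vzero c m -> sqle h g -> h = g].

Definition equivariant_graver (c m : nat) (L : vec c m -> Prop) (G : seq (vec c m)) : Prop :=
  (forall g, List.In g G -> L g) /\
  (forall x, graver_elem L x <-> exists s : finperm, exists2 g, List.In g G & x = act s g).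

(* A finitely supported vector is recorded by its Z^m-part and the word of
   its columns in Z^c up to its support.  The conformal order on columns is a
   wqo (Dickson), hence so is the embedding order on words (Higman), and an
   embedding of words with increasing index map h is realised by a finitary
   permutation sending column i to column h i: the conformal order up to Sym
   is a wqo on finitely supported vectors.  Were there no finite equivariant
   Graver basis, one could choose Graver elements g_0, g_1, ... each outside
   the Sym-orbits of its predecessors; the wqo gives i < j and sigma with
   sigma g_i below g_j, and minimality of g_j forces g_j = sigma g_i. *)

From mathcomp Require Import all_boot all_algebra zify.
From Stdlib Require Import ClassicalEpsilon FunctionalExtensionality.
Set Implicit Arguments. Unset Strict Implicit. Unset Printing Implicit Defensive.
Import GRing.Theory Num.Theory.

Definition good T (R : T -> T -> Prop) (f : nat -> T) :=
  exists i j, i < j /\ R (f i) (f j).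
Definition wqo T (R : T -> T -> Prop) := forall f : nat -> T, good R f.
Definition ptransitive T (R : T -> T -> Prop) :=
  forall y x z, R x y -> R y z -> R x z.

Lemma wqo_eventually_succ T (R : T -> T -> Prop) (f : nat -> T) : wqo R ->
  exists N, forall i, N <= i -> exists2 j, i < j & R (f i) (f j).
Proof.
move=> W; apply: NNPP => noN.
have terminal N : exists i, N <= i /\ forall j, i < j -> ~ R (f i) (f j).
  apply: NNPP => none; apply: noN; exists N => i Ni; apply: NNPP => nosucc.
  by apply: none; exists i; split=> // j ij Rij; apply: nosucc; exists j.
have [t Ht] := @choice _ _ _ terminal.
pose psi n := iter n (fun k => t k.+1) (t 0).
have psi_incr : {homo psi : i j / i < j}.
  by apply: homo_ltn => [y x z|n]; [exact: ltn_trans | exact: (Ht _).1].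
have psi_terminal n j : psi n < j -> ~ R (f (psi n)) (f j).
  by case: n => [|n]; exact: (Ht _).2.
have [i [j [ij Rij]]] := W (f \o psi).
exact: psi_terminal (psi_incr _ _ ij) Rij.
Qed.

Lemma wqo_chain_subseq T (R : T -> T -> Prop) (f : nat -> T) :
  wqo R -> ptransitive R ->
  exists phi : nat -> nat,
    {homo phi : i j / i < j} /\ {homo f \o phi : i j / i < j >-> R i j}.
Proof.
move=> W Rtr; have [N HN] := wqo_eventually_succ f W.
have [nxt Hnxt] : exists nxt : nat -> nat,
    forall i, N <= i -> i < nxt i /\ R (f i) (f (nxt i)).
  apply: (@choice _ _ (fun i j => N <= i -> i < j /\ R (f i) (f j))) => i.
  have [/HN[j ij Rij]|iN] := leqP N i; first by exists j.
  by exists 0 => Ni; lia.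
pose phi n := iter n nxt N.
have N_phi n : N <= phi n.
  by elim: n => //= n IH; exact: leq_trans IH (ltnW (Hnxt _ IH).1).
exists phi; split.
- apply: homo_ltn => [y x z|n]; first exact: ltn_trans.
  exact: (Hnxt _ (N_phi n)).1.
- apply: homo_ltn => [y x z|n]; first exact: Rtr.
  exact: (Hnxt _ (N_phi n)).2.
Qed.

Lemma wqo_preimage T U (R : T -> T -> Prop) (S : U -> U -> Prop) (g : T -> U) :
  wqo S -> (forall x y, S (g x) (g y) -> R x y) -> wqo R.
Proof. by move=> W gS f; have [i [j [ij /gS]]] := W (g \o f); exists i, j. Qed.

Lemma wqo_prod T U (R : T -> T -> Prop) (S : U -> U -> Prop) :
  wqo R -> ptransitive R -> wqo S ->
  wqo (fun x y : T * U => R x.1 y.1 /\ S x.2 y.2).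
Proof.
move=> WR Rtr WS f.
have [phi [phi_incr Rphi]] := wqo_chain_subseq (fst \o f) WR Rtr.
have [i [j [ij Sij]]] := WS (snd \o f \o phi).
by exists (phi i), (phi j); split; [exact: phi_incr | split; [exact: Rphi|]].
Qed.

Lemma wqo_leq : wqo (fun m n : nat => m <= n).
Proof.
move=> f; suff good_from v i : f i <= v -> good (fun m n : nat => m <= n) f.
  exact: good_from _ 0 (leqnn _).
elim: v i => [|v IH] i fi; first by exists i, i.+1; rewrite (leq_trans fi).
have [le|lt] := leqP (f i) (f i.+1); first by exists i, i.+1.
by apply: (IH i.+1); rewrite -ltnS (leq_trans lt fi).
Qed.

Lemma pointwise_ptransitive I T (R : T -> T -> Prop) : ptransitive R ->
  ptransitive (fun x y : I -> T => forall i, R (x i) (y i)).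
Proof. by move=> Rtr y x z xy yz i; exact: Rtr (xy i) (yz i). Qed.

Lemma wqo_pointwise (I : finType) T (R : T -> T -> Prop) :
  wqo R -> ptransitive R -> wqo (fun x y : I -> T => forall i, R (x i) (y i)).
Proof.
move=> W Rtr.
suff Ws (s : seq I) : wqo (fun x y : I -> T => forall i, i \in s -> R (x i) (y i)).
  apply: (wqo_preimage (g := id) (Ws (enum I))) => x y le i.
  by apply: le; rewrite mem_enum.
elim: s => [|i s IH]; first by move=> f; exists 0, 1.
apply: (wqo_preimage (g := fun x => (x i, x)) (wqo_prod W Rtr IH)).
move=> x y [/= Ri Rs] k.
by rewrite inE => /predU1P[->|/Rs].
Qed.

Definition int_parts (a : int) : nat * nat :=
  if (0 <= a)%R then (absz a, 0) else (0, absz a).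

Lemma coord_le_parts a b : coord_le a b <->
  (int_parts a).1 <= (int_parts b).1 /\ (int_parts a).2 <= (int_parts b).2.
Proof.
rewrite /coord_le /int_parts; case: ifP; case: ifP => /= b0 a0; split; try case; nia.
Qed.

Lemma coord_le_trans : ptransitive coord_le.
Proof.
move=> b a d /coord_le_parts[le1 le2] /coord_le_parts[le1' le2'].
by apply/coord_le_parts; split; [exact: leq_trans le1' | exact: leq_trans le2'].
Qed.

Lemma coord_le0 (b : int) : coord_le 0 b.
Proof. by rewrite /coord_le mul0r normr0 normr_ge0. Qed.

Lemma wqo_coord_le : wqo coord_le.
Proof.
apply: (wqo_preimage (g := int_parts) (wqo_prod wqo_leq leq_trans wqo_leq)).
by move=> a b /coord_le_parts.
Qed.

Lemma ex_minimal A (mu : A -> nat) (P : A -> Prop) : (exists a, P a) ->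
  exists a, P a /\ forall b, P b -> mu a <= mu b.
Proof.
move=> [a Pa]; suff ex_lt n a' : P a' -> mu a' < n ->
    exists a, P a /\ forall b, P b -> mu a <= mu b.
  exact: ex_lt _ a Pa (ltnSn _).
elim: n a' => // n IH a' Pa' lt_n.
have [[b [Pb lt]]|no_lt] := classic (exists b, P b /\ mu b < mu a').
  by apply: (IH b) => //; lia.
exists a'; split=> // b Pb; rewrite leqNgt; apply/negP => lt; apply: no_lt.
by exists b.
Qed.

Lemma mkseq_eq A (f g : nat -> A) n :
  mkseq f n = mkseq g n <-> forall i, i < n -> f i = g i.
Proof.
split=> [fg i lt|fg]; first by rewrite -(nth_mkseq (f i) f lt) fg nth_mkseq.
by apply/eq_in_map => i; rewrite mem_iota => /andP[_ lt]; exact: fg.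
Qed.

Lemma dependent_choice_seq A (a0 : A) (P : seq A -> A -> Prop) :
  (forall (f : nat -> A) n, (forall i, i < n -> P (mkseq f i) (f i)) ->
     exists a, P (mkseq f n) a) ->
  exists f : nat -> A, forall n, P (mkseq f n) (f n).
Proof.
move=> extend; pose next p := epsilon (inhabits a0) (P p).
pose prefix n := iter n (fun p => rcons p (next p)) [::].
pose f n := next (prefix n).
have prefixE n : prefix n = mkseq f n by elim: n => //= n IH; rewrite mkseqS -IH.
exists f; suff Pf n i : i < n -> P (mkseq f i) (f i).
  by move=> n; exact: Pf n.+1 n (ltnSn n).
elim: n i => // n IH i; rewrite ltnS leq_eqVlt => /predU1P[->|/IH//].
rewrite -prefixE; apply: epsilon_spec; rewrite prefixE; exact: extend.
Qed.

Lemma InP A (x : A) s : List.In x s <-> exists2 i, i < size s & x = nth x s i.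
Proof.
elim: s => [|y s IH] /=; first by split=> // -[].
split=> [[->|/IH[i lt xE]]|[[|i] /= lt xE]]; first by exists 0.
- by exists i.+1.
- by left.
- by right; apply/IH; exists i.
Qed.

Lemma In_mkseq A (f : nat -> A) n x :
  List.In x (mkseq f n) <-> exists2 i, i < n & x = f i.
Proof.
rewrite InP size_mkseq; split=> -[i lt xE]; exists i => //.
  by rewrite xE nth_mkseq.
by rewrite nth_mkseq.
Qed.

Section Higman.
Variables (T : Type) (R : T -> T -> Prop).

Inductive emb : seq T -> seq T -> Prop :=
| emb_nil t : emb [::] t
| emb_skip s b t : emb s t -> emb s (b :: t)
| emb_cons a s b t : R a b -> emb s t -> emb (a :: s) (b :: t).

Lemma emb_index_map (x0 : T) s t : emb s t ->
  exists h : nat -> nat, {homo h : i j / i < j} /\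
    forall i, i < size s -> h i < size t /\ R (nth x0 s i) (nth x0 t (h i)).
Proof.
elim=> {s t} [t|s b t _ [h [h_incr h_emb]]|a s b t ab _ [h [h_incr h_emb]]].
- by exists id; split.
- by exists (succn \o h); split=> [i j /h_incr|i /h_emb].
- exists (fun i => if i is i'.+1 then (h i').+1 else 0); split.
    by case=> [|i] [|j] //; rewrite !ltnS => /h_incr.
  by case=> [|i] //= /h_emb.
Qed.

Hypotheses (W : wqo R) (Rtr : ptransitive R).

Let bad f := ~ good emb f.
Let bad_prefix p := exists2 f, bad f & mkseq f (size p) = p.
Let minimal_next p w := bad_prefix (rcons p w) /\
  forall w', bad_prefix (rcons p w') -> size w <= size w'.

Let ex_minimal_bad_seq : (exists f, bad f) ->
  exists M, forall n, minimal_next (mkseq M n) (M n).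
Proof.
move=> [f0 bad_f0]; apply: (dependent_choice_seq [::]) => f n prev.
have [g bad_g]: bad_prefix (mkseq f n).
  case: n prev => [_|n prev]; first by exists f0.
  by rewrite mkseqS; exact: (prev n (ltnSn n)).1.
rewrite size_mkseq => gf; apply: ex_minimal; exists (g n), g => //.
by rewrite size_rcons size_mkseq mkseqS gf.
Qed.

Lemma higman : wqo emb.
Proof.
move=> f0; apply: NNPP => bad_f0.
have [M minM] := ex_minimal_bad_seq (ex_intro _ f0 bad_f0).
have M_bad : bad M.
  move=> [i [j [ij embM]]]; have [[g bad_g]] := minM j.
  rewrite size_rcons size_mkseq -mkseqS => /mkseq_eq gM _.
  by apply: bad_g; exists i, j; rewrite !gM // ltnW.
have M_min n g : bad g -> (forall i, i < n -> g i = M i) ->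
    size (M n) <= size (g n).
  move=> bad_g /mkseq_eq gM; apply: (minM n).2; exists g => //.
  by rewrite size_rcons size_mkseq mkseqS gM.
have M_neq_nil n : M n <> [::].
  move=> Mn; apply: M_bad; exists n, n.+1.
  by rewrite Mn; split=> //; exact: emb_nil.
have [x0 _] : exists x0 : T, True by case: (M 0) (M_neq_nil 0) => [|x0 ?] //; exists x0.
pose a n := head x0 (M n); pose v n := behead (M n).
have Mav n : M n = a n :: v n by rewrite /a /v; case: (M n) (M_neq_nil n).
have [phi [phi_incr Rphi]] := wqo_chain_subseq a W Rtr.
have phi0 k : phi 0 <= phi k by case: k => // k; exact/ltnW/phi_incr.
(* M with its tail from phi 0 on replaced by v \o phi is bad, yet shorter at phi 0. *)
pose g k := if k < phi 0 then M k else v (phi (k - phi 0)).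
have: size (M (phi 0)) <= size (g (phi 0)).
  apply: M_min => [|i lt]; last by rewrite /g lt.
  move=> [i [j [ij]]]; rewrite /g.
  case: (ltnP i (phi 0)) => hi; case: (ltnP j (phi 0)) => hj emb_ij; apply: M_bad.
  - by exists i, j.
  - exists i, (phi (j - phi 0)); split; first exact: leq_trans hi (phi0 _).
    by rewrite (Mav (phi _)); exact: emb_skip.
  - by have := leq_ltn_trans hi (ltn_trans ij hj); rewrite ltnn.
  - exists (phi (i - phi 0)), (phi (j - phi 0)).
    split; first by apply: phi_incr; lia.
    by rewrite !Mav; apply: emb_cons => //; apply: Rphi; lia.
by rewrite /g ltnn subnn Mav /= ltnn.
Qed.

End Higman.

Definition swapn (a b x : nat) := if x == a then b else if x == b then a else x.

Lemma swapnK a b : involutive (swapn a b).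
Proof.
move=> x; rewrite /swapn.
have [->|xa] := eqVneq x a.
  by rewrite eqxx; case: (eqVneq b a) => [->|]; rewrite ?eqxx.
have [->|xb] := eqVneq x b; first by rewrite eqxx.
by rewrite (negbTE xa) (negbTE xb).
Qed.

Lemma swapn_fin a b : exists N, forall i, N <= i -> swapn a b i = i.
Proof. by exists (maxn a b).+1 => i lt; rewrite /swapn !ifN_eq //; lia. Qed.

Definition fp_swap a b := FinPerm (swapnK a b) (swapnK a b) (swapn_fin a b).

Definition fp1 := @FinPerm id id (fun _ => erefl) (fun _ => erefl)
  (ex_intro _ 0 (fun _ _ => erefl)).

Lemma fp_mul_fin (s t : finperm) :
  exists N, forall i, N <= i -> (pfun s \o pfun t) i = i.
Proof.
have [[Ns Hs] [Nt Ht]] := (pfin s, pfin t).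
by exists (maxn Ns Nt) => i le /=; rewrite Ht ?Hs //; lia.
Qed.

Definition fp_mul (s t : finperm) :=
  FinPerm (can_comp (pfunK s) (pfunK t)) (can_comp (pinvK t) (pinvK s))
    (fp_mul_fin s t).

Lemma fp_inv_fin (s : finperm) : exists N, forall i, N <= i -> pinv s i = i.
Proof. by have [N HN] := pfin s; exists N => i le; rewrite -{1}(HN i le) pfunK. Qed.

Definition fp_inv (s : finperm) := FinPerm (pinvK s) (pfunK s) (fp_inv_fin s).

Fixpoint fp_of_incr (h : nat -> nat) n : finperm :=
  if n is n'.+1 then fp_mul (fp_of_incr h n') (fp_swap n' (h n')) else fp1.

Lemma fp_of_incr_out h n x : (forall k, k < n -> x != k /\ x != h k) ->
  pfun (fp_of_incr h n) x = x.
Proof.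
elim: n => //= n IH xn; rewrite /swapn.
have [/negbTE-> /negbTE->] := xn n (ltnSn n); apply: IH => k lt.
by apply: xn; rewrite ltnW.
Qed.

Lemma fp_of_incr_lt h : {homo h : i j / i < j} ->
  forall n i, i < n -> pfun (fp_of_incr h n) i = h i.
Proof.
move=> h_incr; have le_h k : k <= h k.
  by elim: k => // k IH; exact: leq_ltn_trans IH (h_incr _ _ (ltnSn k)).
elim=> // n IH i; rewrite ltnS leq_eqVlt => /predU1P[->|lt] /=; rewrite /swapn.
  rewrite eqxx; apply: fp_of_incr_out => k lt; have := h_incr _ _ lt.
  by have := le_h n; split; apply/eqP; lia.
by have le_n := le_h n; rewrite !ifN_eq ?IH //; lia.
Qed.

Section Action.
Variables (c m : nat).
Implicit Types (x y : vec c m) (s : finperm).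

Lemma actK s : cancel (@act c m s) (act (fp_inv s)).
Proof.
by case=> u v; congr pair; apply: functional_extensionality => i /=; rewrite pfunK.
Qed.

Lemma act_neq0 s x : x <> vzero c m -> act s x <> vzero c m.
Proof. by move=> x0 /(congr1 (act (fp_inv s))); rewrite actK. Qed.

Lemma emb_columns_act x y n l :
  (forall i, n <= i -> forall j, x.1 i j = 0%R) ->
  emb (fun a b : 'I_c -> int => forall j, coord_le (a j) (b j))
      (mkseq x.1 n) (mkseq y.1 l) ->
  exists s, forall i j, coord_le ((act s x).1 i j) (y.1 i j).
Proof.
move=> x_supp /(emb_index_map (fun _ => 0%R)) [h [h_incr h_emb]].
exists (fp_of_incr h n) => i j /=; set i' := pinv _ i.
have [lt|ge] := ltnP i' n; last by rewrite x_supp //; apply: coord_le0.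
have hi' : h i' = i by rewrite -(fp_of_incr_lt h_incr lt) /i' pinvK.
rewrite size_mkseq in h_emb; have [hl] := h_emb _ lt.
by rewrite size_mkseq in hl; rewrite !nth_mkseq // hi'.
Qed.

Lemma sym_sqle_good (f : nat -> vec c m) : (forall n, fin_supp (f n)) ->
  good (fun x y => exists s, sqle (act s x) y) f.
Proof.
move=> /(@choice _ _ _)[N f_supp].
have colle_trans := pointwise_ptransitive (I := 'I_c) coord_le_trans.
have W := wqo_prod (wqo_pointwise (I := 'I_m) wqo_coord_le coord_le_trans)
  (pointwise_ptransitive (I := 'I_m) coord_le_trans)
  (higman (wqo_pointwise (I := 'I_c) wqo_coord_le coord_le_trans) colle_trans).
have [i [j [ij [/= le2 emb1]]]] := W (fun n => ((f n).2, mkseq (f n).1 (N n))).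
have [s le1] := emb_columns_act (f_supp i) emb1.
by exists i, j; split=> //; exists s; split.
Qed.

End Action.

Definition in_orbits c m (G : seq (vec c m)) (x : vec c m) :=
  exists s : finperm, exists2 g, List.In g G & x = act s g.

Section Graver.
Variables (c m : nat) (L : vec c m -> Prop).
Hypothesis L_inv : sym_invariant L.

Lemma graver_elem_act s g : graver_elem L g -> graver_elem L (act s g).
Proof.
move=> [Lg g_neq0 g_min]; split; [exact: L_inv | exact: act_neq0 |].
move=> h Lh h_neq0 le_h; rewrite -[h](actK (fp_inv s)) /=.
congr act; apply: g_min; [exact: L_inv | exact: act_neq0 |]; split=> [i j|k].
  by have := le_h.1 (pfun s i) j; rewrite /= pfunK.
exact: le_h.2.
Qed.

Lemma equivariant_graver_orbits G :
  (forall g, List.In g G -> graver_elem L g) ->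
  (forall x, graver_elem L x -> in_orbits G x) -> equivariant_graver L G.
Proof.
move=> G_graver G_orbits; split=> [g /G_graver[] //|x].
by split=> [/G_orbits //|[s [g /G_graver g_graver ->]]]; exact: graver_elem_act.
Qed.

End Graver.

Theorem lemma5p12 (c m : nat) (L : vec c m -> Prop) :
  lattice L -> sym_invariant L ->
  exists G : seq (vec c m), equivariant_graver L G.
Proof.
move=> [L_supp _ _ _] L_inv.
have [[G [G_graver G_orbits]]|no_basis] := classic (exists G,
  (forall g, List.In g G -> graver_elem L g) /\
  forall x, graver_elem L x -> in_orbits G x).
  by exists G; exact: equivariant_graver_orbits.
have [f Pf] : exists f : nat -> vec c m,
    forall n, graver_elem L (f n) /\ ~ in_orbits (mkseq f n) (f n).
  apply: (dependent_choice_seq (vzero c m)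
    (P := fun p x => graver_elem L x /\ ~ in_orbits p x)) => f n prev.
  apply: NNPP => no_next.
  apply: no_basis; exists (mkseq f n).
  split=> [g /In_mkseq[i lt ->]|x x_graver].
    exact: (prev i lt).1.
  by apply: NNPP => x_out; apply: no_next; exists x.
have L_f n : L (f n) by have [[]] := Pf n.
have [i [j [ij [s le_ij]]]] := sym_sqle_good (fun n => L_supp _ (L_f n)).
have [[Lfi fi_neq0 _] _] := Pf i; have [[_ _ fj_min] fj_out] := Pf j.
case: fj_out; exists s, (f i); first by apply/In_mkseq; exists i.
by symmetry; apply: fj_min => //; [exact: L_inv | exact: act_neq0].
Qed.
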